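(* Let $\Omega\in\mathcal K_0$ be invertible and let $N\ge0$ be an integer. Then for $r=0,1,\dots,2N$, the $\mathcal K_0$-vector spaces ${\rm Hom}_{\mathcal{TLB}(q,\Omega)}((m,v^r),(m,v^{2N-r}))$ are all isomorphic to one another.
   Context: $\mathcal K_0=\mathbb C(q^{1/k})$, $q$ an indeterminate, with $q^{1/2}\in\mathcal K_0$. The Temperley–Lieb category of type $B$, $\mathcal{TLB}(q,\Omega)$, is the $\mathcal K_0$-linear category with objects $(m,v^r)$, $r\in\mathbb Z_{\ge0}$. A diagram $(m,v^r)\to(m,v^s)$ is drawn in a rectangle: a thick vertical strand (the pole) joins the left end of the bottom edge to the left end of the top edge; to its right there are $r$ points on the bottom edge and $s$ on the top edge, and thin unoriented strands consisting of arcs pairing these $r+s$ points and possibly closed loops; thin strands may cross each other and the pole, every crossing carrying over/under information. Diagrams are taken up to regular isotopy (planar isotopy, Reidemeister II and III moves, also involving the pole, and cancellation of two opposite curls on a thin strand). Composition is vertical concatenation, extended bilinearly. Morphisms are $\mathcal K_0$-linear combinations of diagrams modulo the following relations, imposed locally (i.e. anywhere inside a diagram): (1) $q^{1/2}X_+=q\,\|+E$ and $q^{-1/2}X_-=q^{-1}\|+E$, where $X_+$ is a crossing of two thin strands in which the strand from bottom-right to top-left passes over, $X_-$ the other crossing, $\|$ two parallel vertical thin strands and $E$ the diagram with the two bottom points joined by an arc and the two top points joined by an arc; (2) a closed thin loop with no crossings equals $-(q+q^{-1})$; (3) letting $L:(m,v)\to(m,v)$ be the diagram whose thin strand leaves the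 bottom, passes in front of the pole (lower crossing), winds around it and returns to the top passing behind the pole (upper crossing), one has $q\,L\circ L=(\Omega+\Omega^{-1})L-q^{-1}{\rm id}_{(m,v)}$; (4) a closed thin loop encircling the pole once, passing in front of the pole at its lower crossing and behind it at its upper crossing, may be removed at the cost of the factor $-(\Omega+\Omega^{-1})$. *)

(* Temperley-Lieb category of type B, TLB(q,Omega),
   presented by generating diagrams ("words") and local relations. *)
From HB Require Import structures.
From mathcomp Require Import all_boot all_algebra.
From mathcomp Require Import complex fraction Rstruct.

Set Implicit Arguments.
Unset Strict Implicit.
Unset Printing Implicit Defensive.

(* A horizontal slice of a diagram is a sequence
   of colours, read from left to right: [true] = the pole, [false] = a
   thin point.  Positions are 0-based from the left.
   - [Cup i]      : inserts a thin arc (two new thin points) at positions i,i+1;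
   - [Cap i]      : joins the (thin) points at positions i,i+1 by an arc;
   - [Cross b i]  : crossing of the strands at positions i,i+1;
                    [b = true]  is X_+ (the strand from bottom-right to
                    top-left passes over), [b = false] is X_-.
                    Either strand may be the pole.                     *)
Inductive gen := Cup of nat | Cap of nat | Cross of bool & nat.

Definition gen_code (g : gen) : nat * nat * bool :=
  match g with
  | Cup i => (0, i, false) | Cap i => (1, i, false) | Cross b i => (2, i, b)
  end%N.
Definition gen_decode (c : nat * nat * bool) : option gen :=
  match c with
  | (0, i, _) => Some (Cup i) | (1, i, _) => Some (Cap i)
  | (2, i, b) => Some (Cross b i) | _ => None
  end%N.
Lemma gen_codeK : pcancel gen_code gen_decode. Proof. by case. Qed.
HB.instance Definition _ := Equality.copy gen (pcan_type gen_codeK).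

(* A word is a vertical stacking of elementary diagrams, read from
   bottom (head of the list) to top. *)
Definition word := seq gen.

Definition gpos (g : gen) : nat :=
  match g with Cup i => i | Cap i => i | Cross _ i => i end.
Definition gsetpos (g : gen) (j : nat) : gen :=
  match g with Cup _ => Cup j | Cap _ => Cap j | Cross b _ => Cross b j end.
Definition gin (g : gen) : nat := match g with Cup _ => 0 | _ => 2 end%N.
Definition gout (g : gen) : nat := match g with Cap _ => 0 | _ => 2 end%N.

Definition gapp (g : gen) (s : seq bool) : option (seq bool) :=
  match g with
  | Cup i => if (i <= size s)%N
             then Some (take i s ++ [:: false; false] ++ drop i s) else None
  | Cap i => if [&& (i.+1 < size s)%N, ~~ nth true s i & ~~ nth true s i.+1]
             then Some (take i s ++ drop i.+2 s) else None
  | Cross _ i => if (i.+1 < size s)%N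
             then Some (take i s ++ [:: nth true s i.+1; nth true s i] ++ drop i.+2 s)
             else None
  end.

Definition wapp (w : word) (s : seq bool) : option (seq bool) :=
  foldl (fun o g => obind (gapp g) o) (Some s) w.

(* the object (m, v^r) *)
Definition obj (r : nat) : seq bool := true :: nseq r false.

Local Open Scope ring_scope.

Section TLB.
Variable K : fieldType.

(* formal K-linear combinations of words *)
Definition fsum := seq (K * word).
Definition coef (x : fsum) (w : word) : K := \sum_(p <- x | p.2 == w) p.1.
Definition fscale (c : K) (x : fsum) : fsum := [seq (c * p.1, p.2) | p <- x].
Definition fsub (x y : fsum) : fsum := x ++ fscale (-1) y.
Definition sandwich (u : word) (x : fsum) (v : word) : fsum :=
  [seq (p.1, u ++ p.2 ++ v) | p <- x].
Definition typed (s t : seq bool) (x : fsum) : Prop :=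
  forall p, p \in x -> wapp p.2 s = Some t.

Definition rcurl (b : bool) (i : nat) : word := [:: Cup i.+1; Cross b i; Cap i.+1].
Definition lcurl (b : bool) (i : nat) : word := [:: Cup i; Cross b i.+1; Cap i].
(* the diagram L : thin strand at i+1 winds around the pole at i,
   in front at the lower crossing, behind at the upper one *)
Definition Lw (i : nat) : word := [:: Cross true i; Cross true i].

Variables (qh Om : K).
Let q := qh ^+ 2.

(* Local relations lhs = rhs, valid in a slice s (the context s also
   carries the strands to the left and right of the local picture). *)
Inductive brel (s : seq bool) : fsum -> fsum -> Prop :=
  (* regular isotopy: planar isotopy ... *)
  | br_interchange g h : (gpos g + gout g <= gpos h)%N ->
      brel s [:: (1, [:: g; h])]
             [:: (1, [:: gsetpos h (gpos h + gin g - gout g)%N; g])]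
  | br_zig i : brel s [:: (1, [:: Cup i.+1; Cap i])] [:: (1, [::])]
  | br_zag i : brel s [:: (1, [:: Cup i; Cap i.+1])] [:: (1, [::])]
  | br_capslide b i : brel s [:: (1, [:: Cross b i.+1; Cap i])]
                             [:: (1, [:: Cross (~~ b) i; Cap i.+1])]
  | br_cupslide b i : brel s [:: (1, [:: Cup i; Cross b i.+1])]
                             [:: (1, [:: Cup i.+1; Cross (~~ b) i])]
  (* ... Reidemeister II and III (also involving the pole) ... *)
  | br_R2 b i : brel s [:: (1, [:: Cross b i; Cross (~~ b) i])] [:: (1, [::])]
  | br_R3 b i : brel s [:: (1, [:: Cross b i; Cross b i.+1; Cross b i])]
                       [:: (1, [:: Cross b i.+1; Cross b i; Cross b i.+1])]
  (* ... cancellation of two opposite curls on a thin strand *)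
  | br_curlRL b i : brel s [:: (1, rcurl b i ++ lcurl (~~ b) i)] [:: (1, [::])]
  | br_curlLR b i : brel s [:: (1, lcurl b i ++ rcurl (~~ b) i)] [:: (1, [::])]
  | br_skein_pos i : brel s [:: (qh, [:: Cross true i])]
                            [:: (q, [::]); (1, [:: Cap i; Cup i])]
  | br_skein_neg i : brel s [:: (qh^-1, [:: Cross false i])]
                            [:: (q^-1, [::]); (1, [:: Cap i; Cup i])]
  | br_loop i : brel s [:: (1, [:: Cup i; Cap i])] [:: (- (q + q^-1), [::])]
  | br_L i : nth false s i -> ~~ nth true s i.+1 ->
      brel s [:: (q, Lw i ++ Lw i)] [:: (Om + Om^-1, Lw i); (- q^-1, [::])]
  | br_poleloop i : nth false s i ->
      brel s [:: (1, [:: Cup i.+1] ++ Lw i ++ [:: Cap i.+1])]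
             [:: (- (Om + Om^-1), [::])].

Definition relator (s0 t0 : seq bool) (x : fsum) : Prop :=
  exists u v s t lhs rhs,
    [/\ wapp u s0 = Some s, brel s lhs rhs, typed s t (lhs ++ rhs),
        wapp v t = Some t0 & x = sandwich u (fsub lhs rhs) v].

Definition inRel (s0 t0 : seq bool) (x : fsum) : Prop :=
  exists rs : seq (K * fsum),
    (forall p, p \in rs -> relator s0 t0 p.2) /\
    coef x =1 coef (flatten [seq fscale p.1 p.2 | p <- rs]).

Definition fext (f : word -> fsum) (x : fsum) : fsum :=
  flatten [seq fscale p.1 (f p.2) | p <- x].

(* Hom(s,t) = (free K-space on diagrams s -> t) / (span of relators).
   Two such Hom spaces are isomorphic iff there are K-linear maps between
   the free spaces (given on basis diagrams) preserving the relation
   subspaces and inverse to each other modulo relations. *)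
Definition hom_iso (s1 t1 s2 t2 : seq bool) : Prop :=
  exists (phi psi : word -> fsum),
    [/\ forall w, wapp w s1 = Some t1 -> typed s2 t2 (phi w),
        forall w, wapp w s2 = Some t2 -> typed s1 t1 (psi w),
        forall x, typed s1 t1 x -> inRel s1 t1 x -> inRel s2 t2 (fext phi x)
      & forall x, typed s2 t2 x -> inRel s2 t2 x -> inRel s1 t1 (fext psi x)] /\
    [/\ forall w, wapp w s1 = Some t1 ->
          inRel s1 t1 (fsub (fext psi (phi w)) [:: (1, w)])
      & forall w, wapp w s2 = Some t2 ->
          inRel s2 t2 (fsub (fext phi (psi w)) [:: (1, w)])].

End TLB.

(* K0 = C(q^{1/k}) : rational functions in the indeterminate t = q^{1/k}
   over the complex numbers C = R[i]. *)
Definition K0 : fieldType := {fraction {poly (complex Rdefinitions.R)}}.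
Definition qroot : K0 := tofrac ('X : {poly (complex Rdefinitions.R)}).
(* q^{1/2} = t^{k/2} (k even, so that q^{1/2} lies in K0); q = t^k *)
Definition qhalf (k : nat) : K0 := qroot ^+ (k./2).

From mathcomp Require Import all_boot all_algebra.
From mathcomp Require Import ring zify.

(* Bending the rightmost thin strand gives mutually inverse maps
   Hom(s, t v) <-> Hom(s v, t): put a cap on top of the extra top point, or
   a cup below the extra bottom point.  The two composites are a diagram
   with a zig-zag attached, which the snake isotopies (after sliding the cup
   or cap along the diagram by planar interchanges) straighten back to the
   diagram.  Since all relations are local, relators stay relators after
   composing with a diagram and after adding a through-strand on the right,
   so both maps descend to the quotients.  Iterating the bending,
   Hom((m,v^r),(m,v^(n-r))) is isomorphic to Hom((m,v^0),(m,v^n)) for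
   every r <= n; no property of q or Omega is used. *)

Set Implicit Arguments.
Unset Strict Implicit.
Unset Printing Implicit Defensive.
Import GRing.Theory.
Local Open Scope ring_scope.

Lemma cat_injr (T : Type) (u : seq T) : injective (cat u).
Proof. by elim: u => // x u IH a b [/IH]. Qed.

Lemma cat_injl (T : Type) (v : seq T) : injective (cat^~ v).
Proof.
move=> a b /(congr1 rev); rewrite !rev_cat => /cat_injr /(congr1 rev).
by rewrite !revK.
Qed.

Lemma obj_S n : obj n.+1 = obj n ++ [:: false].
Proof. by rewrite /obj -[n.+1]addn1 nseqD. Qed.

Lemma wapp_cons g w s :
  wapp (g :: w) s = if gapp g s is Some s1 then wapp w s1 else None.
Proof. by rewrite /wapp /=; case: (gapp g s) => //; elim: w. Qed.

Lemma wapp0 s : wapp [::] s = Some s.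
Proof. by []. Qed.

Lemma wapp1 g s : wapp [:: g] s = gapp g s.
Proof. by rewrite wapp_cons; case: (gapp g s). Qed.

Lemma wapp_cat w1 w2 s :
  wapp (w1 ++ w2) s = if wapp w1 s is Some s1 then wapp w2 s1 else None.
Proof. by elim: w1 s => [|g w1 IH] s //=; rewrite !wapp_cons; case: (gapp g s). Qed.

Lemma gapp_size g s t : gapp g s = Some t ->
  (gpos g + gin g <= size s)%N /\ (size t + gin g = size s + gout g)%N.
Proof.
case: g => [i|i|b i] /=; case: ifP => // H [<-];
  rewrite !size_cat /= size_drop size_takel; lia.
Qed.

Lemma gapp_catr g s t e : gapp g s = Some t -> gapp g (s ++ e) = Some (t ++ e).
Proof.
have drop_catl n (s1 s2 : seq bool) :
  (n <= size s1)%N -> drop n (s1 ++ s2) = drop n s1 ++ s2.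
  by rewrite drop_cat leq_eqVlt => /orP [/eqP -> | ->];
    rewrite ?ltnn ?subnn ?drop_size ?drop0.
case: g => [i|i|b i] /=.
- case: ifP => // H [<-]; rewrite size_cat (leq_trans H (leq_addr _ _)).
  by rewrite takel_cat // drop_catl // -!catA.
- case: ifP => // /and3P [H1 H2 H3] [<-].
  rewrite size_cat !nth_cat (leq_trans H1 (leq_addr _ _)) H1 (ltnW H1) H2 H3 /=.
  by rewrite takel_cat ?drop_catl ?catA //; apply/ltnW/ltnW.
- case: ifP => // H [<-].
  rewrite size_cat !nth_cat (leq_trans H (leq_addr _ _)) H (ltnW H) /=.
  by rewrite takel_cat ?drop_catl -?catA //; apply/ltnW/ltnW.
Qed.

Lemma wapp_catr w s t e : wapp w s = Some t -> wapp w (s ++ e) = Some (t ++ e).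
Proof.
elim: w s => [|g w IH] s; first by case=> <-.
by rewrite !wapp_cons; case E: (gapp g s) => [s1|] // /IH; rewrite (gapp_catr _ E).
Qed.

Lemma gapp_cup_end s : gapp (Cup (size s)) s = Some (s ++ [:: false; false]).
Proof. by rewrite /= leqnn take_size drop_size. Qed.

Lemma gapp_cap_end s e :
  gapp (Cap (size s)) (s ++ [:: false, false & e]) = Some (s ++ e).
Proof.
have lt_s : ((size s).+1 < size (s ++ [:: false, false & e]))%N.
  by rewrite size_cat /=; lia.
rewrite /= lt_s !nth_cat ltnn subnn ltnNge leqnSn subSnn /= take_size_cat //.
by rewrite drop_cat ltnNge (leqW (leqnSn _)) /= -addn2 addKn /= drop0.
Qed.

Section LinearCombinations.

Variable K : fieldType.
Implicit Types (x y : fsum K) (f g : word -> fsum K).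

Lemma coef_nil w : coef ([::] : fsum K) w = 0.
Proof. by rewrite /coef big_nil. Qed.

Lemma coef_cons (p : K * word) x w :
  coef (p :: x) w = (if p.2 == w then p.1 else 0) + coef x w.
Proof. by rewrite /coef big_cons; case: (p.2 == w); rewrite ?add0r. Qed.

Lemma coef_cat x y w : coef (x ++ y) w = coef x w + coef y w.
Proof. by rewrite /coef big_cat. Qed.

Lemma coef_fscale c x w : coef (fscale c x) w = c * coef x w.
Proof.
elim: x => [|p x IH]; first by rewrite coef_nil mulr0.
by rewrite /= !coef_cons IH mulrDr; case: (p.2 == w); rewrite ?mulr0.
Qed.

Lemma coef_fsub x y w : coef (fsub x y) w = coef x w - coef y w.
Proof. by rewrite coef_cat coef_fscale mulN1r. Qed.

Lemma fext_cons f (p : K * word) x : fext f (p :: x) = fscale p.1 (f p.2) ++ fext f x.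
Proof. by []. Qed.

Lemma fext_cat f x y : fext f (x ++ y) = fext f x ++ fext f y.
Proof. by rewrite /fext map_cat flatten_cat. Qed.

Lemma coef_fext f x w : coef (fext f x) w = \sum_(p <- x) p.1 * coef (f p.2) w.
Proof.
elim: x => [|p x IH]; first by rewrite big_nil coef_nil.
by rewrite coef_cat coef_fscale IH big_cons.
Qed.

Lemma coef_fext_fscale f c x w :
  coef (fext f (fscale c x)) w = c * coef (fext f x) w.
Proof.
rewrite !coef_fext big_map mulr_sumr.
by apply: eq_bigr => p _; rewrite mulrA.
Qed.

Lemma coef_fext_fsub f x y w :
  coef (fext f (fsub x y)) w = coef (fext f x) w - coef (fext f y) w.
Proof. by rewrite fext_cat coef_cat coef_fext_fscale mulN1r. Qed.

Lemma coef_fext_comp f g x :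
  coef (fext (fun w => fext f (g w)) x) =1 coef (fext f (fext g x)).
Proof.
move=> w; elim: x => [|p x IH] //=.
by rewrite fext_cat !coef_cat IH coef_fscale coef_fext_fscale.
Qed.

Lemma coef_flatten (rs : seq (K * fsum K)) w :
  coef (flatten [seq fscale p.1 p.2 | p <- rs]) w = \sum_(p <- rs) p.1 * coef p.2 w.
Proof.
elim: rs => [|p rs IH]; first by rewrite big_nil coef_nil.
by rewrite /= coef_cat coef_fscale IH big_cons.
Qed.

Definition mapw (h : word -> word) x : fsum K := [seq (p.1, h p.2) | p <- x].

Lemma mapw_id x : mapw id x = x.
Proof. by elim: x => [|[c w] x /= ->]. Qed.

Lemma fext_mapw (h : word -> word) x : fext (fun w => [:: (1, h w)]) x = mapw h x.
Proof. by elim: x => [|[c w] x IH] //; rewrite fext_cons IH /= mulr1. Qed.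

Lemma mapw_flatten (h : word -> word) (rs : seq (K * fsum K)) :
  mapw h (flatten [seq fscale p.1 p.2 | p <- rs]) =
  flatten [seq fscale p.1 p.2 | p <- [seq (p.1, mapw h p.2) | p <- rs]].
Proof.
elim: rs => [|p rs /= <-] //; rewrite /mapw map_cat; congr (_ ++ _).
by rewrite /fscale -!map_comp.
Qed.

Lemma eq_coef_mapw (h : word -> word) x y : injective h ->
  coef x =1 coef y -> coef (mapw h x) =1 coef (mapw h y).
Proof.
move=> h_inj Exy w.
have coef_mapw_img w0 z : coef (mapw h z) (h w0) = coef z w0.
  by rewrite /coef big_map; apply: eq_bigl => p /=; rewrite inj_eq.
have [[p _ /eqP <-] | no_preim] := @hasP _ [pred p : K * word | h p.2 == w] (x ++ y).
  by rewrite !coef_mapw_img.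
rewrite /coef !big_map !big1_seq // => p /andP [hp p_in];
  by case: no_preim; exists p; rewrite ?mem_cat ?p_in ?orbT.
Qed.

Lemma typed_cat s t x y : typed s t x -> typed s t y -> typed s t (x ++ y).
Proof. by move=> Tx Ty p; rewrite mem_cat => /orP []; [apply: Tx | apply: Ty]. Qed.

Lemma typed_fscale s t c x : typed s t x -> typed s t (fscale c x).
Proof. by move=> Tx p /mapP [p' /Tx Tp' ->]. Qed.

Lemma typed_fext s t s' t' f x :
  (forall w, wapp w s = Some t -> typed s' t' (f w)) ->
  typed s t x -> typed s' t' (fext f x).
Proof.
move=> Tf; elim: x => [|p x IH] Tx //; rewrite fext_cons.
apply: typed_cat; first by apply/typed_fscale/Tf/Tx; rewrite inE eqxx.
by apply: IH => p' p'x; apply: Tx; rewrite inE p'x orbT.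
Qed.

Lemma typed_catr s t e x : typed s t x -> typed (s ++ e) (t ++ e) x.
Proof. by move=> Tx p /Tx /wapp_catr. Qed.

End LinearCombinations.

Section Relations.

Variables (K : fieldType) (qh Om : K).
Implicit Types (x y : fsum K) (f g : word -> fsum K).

Lemma brel_catr s e l r : brel qh Om s l r -> brel qh Om (s ++ e) l r.
Proof.
have nth_catl d i : nth d s i != d -> nth d (s ++ e) i = nth d s i.
  by case: (ltnP i (size s)) => [lt_is | ge_is];
    rewrite ?nth_cat ?lt_is // nth_default ?eqxx.
case=> [g h|i|i|b i|b i|b i|b i|b i|b i|i|i|i|i Hp Ht|i Hp]; try by constructor.
- by apply: br_L; rewrite nth_catl ?Hp //; case: (nth true s i.+1) Ht.
- by apply: br_poleloop; rewrite nth_catl ?Hp.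
Qed.

Lemma eq_inRel s t x y : coef x =1 coef y -> inRel qh Om s t y -> inRel qh Om s t x.
Proof. by move=> Exy [rs [rs_rel Ey]]; exists rs; split=> // w; rewrite Exy Ey. Qed.

Lemma inRel_nil s t : inRel qh Om s t [::].
Proof. by exists [::]. Qed.

Lemma inRel_cat s t x y :
  inRel qh Om s t x -> inRel qh Om s t y -> inRel qh Om s t (x ++ y).
Proof.
move=> [rs1 [rs1_rel E1]] [rs2 [rs2_rel E2]]; exists (rs1 ++ rs2); split.
  by move=> p; rewrite mem_cat => /orP []; [apply: rs1_rel | apply: rs2_rel].
by move=> w; rewrite coef_cat E1 E2 map_cat flatten_cat coef_cat.
Qed.

Lemma inRel_fscale s t c x : inRel qh Om s t x -> inRel qh Om s t (fscale c x).
Proof.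
move=> [rs [rs_rel E]]; exists [seq (c * p.1, p.2) | p <- rs]; split.
  by move=> p /mapP [p' /rs_rel p'_rel ->].
move=> w; rewrite coef_fscale E !coef_flatten big_map mulr_sumr.
by apply: eq_bigr => p _; rewrite mulrA.
Qed.

Lemma relator_inRel s t x : relator qh Om s t x -> inRel qh Om s t x.
Proof.
move=> x_rel; exists [:: (1, x)]; split; first by move=> p /[1!inE] /eqP ->.
by move=> w; rewrite /= cats0 coef_fscale mul1r.
Qed.

Lemma inRel_mapw s0 t0 s1 t1 (h : word -> word) x : injective h ->
  (forall x, relator qh Om s0 t0 x -> relator qh Om s1 t1 (mapw h x)) ->
  inRel qh Om s0 t0 x -> inRel qh Om s1 t1 (mapw h x).
Proof.
move=> h_inj h_rel [rs [rs_rel E]].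
exists [seq (p.1, mapw h p.2) | p <- rs]; split.
  by move=> p /mapP [p' /rs_rel /h_rel p'_rel ->].
by rewrite -mapw_flatten; apply: eq_coef_mapw.
Qed.

Lemma inRel_catr s t e x : inRel qh Om s t x -> inRel qh Om (s ++ e) (t ++ e) x.
Proof.
move=> [rs [rs_rel E]]; exists rs; split=> // p /rs_rel.
move=> [u [v [s1 [t1 [l [r [Hu Hb Ht Hv ->]]]]]]].
exists u, v, (s1 ++ e), (t1 ++ e), l, r; split.
- exact: wapp_catr.
- exact: brel_catr.
- exact: typed_catr.
- exact: wapp_catr.
- by [].
Qed.

Lemma inRel_precomp s' s t u x : wapp u s' = Some s ->
  inRel qh Om s t x -> inRel qh Om s' t (mapw (cat u) x).
Proof.
move=> Hu; apply: inRel_mapw; first exact: cat_injr.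
move=> _ [u1 [v [s1 [t1 [l [r [Hu1 Hb Ht Hv ->]]]]]]].
exists (u ++ u1), v, s1, t1, l, r; split=> //; first by rewrite wapp_cat Hu.
by rewrite /mapw /sandwich -map_comp; apply: eq_map => p; rewrite /= catA.
Qed.

Lemma inRel_postcomp s t t' v x : wapp v t = Some t' ->
  inRel qh Om s t x -> inRel qh Om s t' (mapw (cat^~ v) x).
Proof.
move=> Hv; apply: inRel_mapw; first exact: cat_injl.
move=> _ [u [v1 [s1 [t1 [l [r [Hu Hb Ht Hv1 ->]]]]]]].
exists u, (v1 ++ v), s1, t1, l, r; split=> //; first by rewrite wapp_cat Hv1.
by rewrite /mapw /sandwich -map_comp; apply: eq_map => p; rewrite /= -!catA.
Qed.

Definition eqw s t (a b : word) := inRel qh Om s t (fsub [:: (1, a)] [:: (1, b)]).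

Lemma eqw_refl s t a : eqw s t a a.
Proof. by apply: (eq_inRel _ (inRel_nil _ _)) => w; rewrite coef_fsub subrr coef_nil. Qed.

Lemma eqw_sym s t a b : eqw s t a b -> eqw s t b a.
Proof.
move=> /(inRel_fscale (-1)); apply: eq_inRel => w.
by rewrite coef_fscale !coef_fsub mulN1r opprB.
Qed.

Lemma eqw_trans s t a b c : eqw s t a b -> eqw s t b c -> eqw s t a c.
Proof.
move=> Eab Ebc; apply: (eq_inRel _ (inRel_cat Eab Ebc)) => w.
by rewrite coef_cat !coef_fsub addrA subrK.
Qed.

Lemma eqw_brel s t a b : brel qh Om s [:: (1, a)] [:: (1, b)] ->
  wapp a s = Some t -> wapp b s = Some t -> eqw s t a b.
Proof.
move=> ab_rel Ha Hb; apply: (eq_inRel (y := sandwich [::] (fsub [:: (1, a)] [:: (1, b)]) [::])).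
  by move=> w; rewrite /= !cats0.
apply: relator_inRel; exists [::], [::], s, t, [:: (1, a)], [:: (1, b)]; split=> //.
by move=> p; rewrite !inE => /orP [] /eqP ->.
Qed.

Lemma eqw_ctx s0 t0 s t u v a b : wapp u s0 = Some s -> wapp v t = Some t0 ->
  eqw s t a b -> eqw s0 t0 (u ++ a ++ v) (u ++ b ++ v).
Proof. by move=> Hu Hv /(inRel_postcomp Hv) /(inRel_precomp Hu). Qed.

Lemma inRel_fext_cancel s t f g y :
  (forall w, wapp w s = Some t -> inRel qh Om s t (fsub (fext g (f w)) [:: (1, w)])) ->
  typed s t y -> inRel qh Om s t (fsub (fext g (fext f y)) y).
Proof.
move=> gfK; elim: y => [|p y IH] Ty; first exact: inRel_nil.
apply: (eq_inRel (y := fscale p.1 (fsub (fext g (f p.2)) [:: (1, p.2)]) ++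
                       fsub (fext g (fext f y)) y)).
  move=> w; rewrite fext_cons fext_cat coef_fsub coef_cat coef_fext_fscale coef_cons.
  rewrite coef_cat coef_fscale !coef_fsub coef_cons coef_nil /=.
  by case: (p.2 == w); ring.
apply: inRel_cat; first by apply/inRel_fscale/gfK/Ty; rewrite inE eqxx.
by apply: IH => p' p'y; apply: Ty; rewrite inE p'y orbT.
Qed.

Lemma hom_iso_sym s1 t1 s2 t2 :
  hom_iso qh Om s1 t1 s2 t2 -> hom_iso qh Om s2 t2 s1 t1.
Proof. by move=> [phi [psi [[T1 T2 R1 R2] [E1 E2]]]]; exists psi, phi. Qed.

Lemma hom_iso_trans s1 t1 s2 t2 s3 t3 :
  hom_iso qh Om s1 t1 s2 t2 -> hom_iso qh Om s2 t2 s3 t3 ->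
  hom_iso qh Om s1 t1 s3 t3.
Proof.
move=> [phi1 [psi1 [[A1 B1 C1 D1] [E1 F1]]]] [phi2 [psi2 [[A2 B2 C2 D2] [E2 F2]]]].
exists (fun w => fext phi2 (phi1 w)), (fun w => fext psi1 (psi2 w)); split; split.
- by move=> w /A1; apply: typed_fext.
- by move=> w /B2; apply: typed_fext.
- move=> x Tx Rx; apply: eq_inRel (coef_fext_comp _ _ _) _.
  by apply: C2; [apply: typed_fext Tx | apply: C1].
- move=> x Tx Rx; apply: eq_inRel (coef_fext_comp _ _ _) _.
  by apply: D1; [apply: typed_fext Tx | apply: D2].
- move=> w Hw; have Ty := A1 w Hw; set y := phi1 w.
  apply: (eq_inRel (y := fext psi1 (fsub (fext psi2 (fext phi2 y)) y) ++
                         fsub (fext psi1 y) [:: (1, w)])).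
    by move=> w'; rewrite coef_fsub coef_fext_comp coef_cat coef_fext_fsub coef_fsub; ring.
  apply: inRel_cat; last exact: E1.
  apply: D1; last exact: inRel_fext_cancel.
  by apply: typed_cat; [apply/(typed_fext B2)/(typed_fext A2) | apply: typed_fscale].
- move=> w Hw; have Ty := B2 w Hw; set y := psi2 w.
  apply: (eq_inRel (y := fext phi2 (fsub (fext phi1 (fext psi1 y)) y) ++
                         fsub (fext phi2 y) [:: (1, w)])).
    by move=> w'; rewrite coef_fsub coef_fext_comp coef_cat coef_fext_fsub coef_fsub; ring.
  apply: inRel_cat; last exact: F2.
  apply: C2; last exact: inRel_fext_cancel.
  by apply: typed_cat; [apply/(typed_fext A1)/(typed_fext B1) | apply: typed_fscale].
Qed.

Lemma hom_iso_mapw s1 t1 s2 t2 (h1 h2 : word -> word) :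
  (forall w, wapp w s1 = Some t1 -> wapp (h1 w) s2 = Some t2) ->
  (forall w, wapp w s2 = Some t2 -> wapp (h2 w) s1 = Some t1) ->
  (forall x, inRel qh Om s1 t1 x -> inRel qh Om s2 t2 (mapw h1 x)) ->
  (forall x, inRel qh Om s2 t2 x -> inRel qh Om s1 t1 (mapw h2 x)) ->
  (forall w, wapp w s1 = Some t1 -> eqw s1 t1 (h2 (h1 w)) w) ->
  (forall w, wapp w s2 = Some t2 -> eqw s2 t2 (h1 (h2 w)) w) ->
  hom_iso qh Om s1 t1 s2 t2.
Proof.
move=> T1 T2 R1 R2 E1 E2.
exists (fun w => [:: (1, h1 w)]), (fun w => [:: (1, h2 w)]); split; split.
- by move=> w /T1 Tw p /[1!inE] /eqP ->.
- by move=> w /T2 Tw p /[1!inE] /eqP ->.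
- by move=> x _ /R1; rewrite fext_mapw.
- by move=> x _ /R2; rewrite fext_mapw.
- by move=> w /E1; rewrite fext_mapw.
- by move=> w /E2; rewrite fext_mapw.
Qed.

Lemma hom_iso_refl s t : hom_iso qh Om s t s t.
Proof.
by apply: (@hom_iso_mapw _ _ _ _ id id) => // [x|x|w _|w _];
  rewrite ?mapw_id //; apply: eqw_refl.
Qed.

Lemma cup_slide s t w : wapp w s = Some t ->
  eqw s (t ++ [:: false; false]) (Cup (size s) :: w) (w ++ [:: Cup (size t)]).
Proof.
elim: w s => [|g w IH] s; first by case=> ->; apply: eqw_refl.
rewrite wapp_cons; case Eg: (gapp g s) => [s1|] // Hw.
have [le_gs size_s1] := gapp_size Eg.
have Hg : wapp [:: g] s = Some s1 by rewrite wapp1.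
apply: (@eqw_trans _ _ _ ([:: g; Cup (size s1)] ++ w)); last first.
  by have := eqw_ctx Hg (wapp0 _) (IH _ Hw); rewrite !cats0.
apply: (eqw_ctx (u := [::]) (a := [:: Cup (size s); g])
               (b := [:: g; Cup (size s1)]) erefl (wapp_catr _ Hw)).
apply/eqw_sym/eqw_brel.
- have := @br_interchange _ qh Om s g (Cup (size s1)).
  by rewrite /= (_ : (size s1 + gin g - gout g)%N = size s); [apply; lia | lia].
- by rewrite wapp_cons Eg wapp1 gapp_cup_end.
- by rewrite wapp_cons gapp_cup_end wapp1 (gapp_catr _ Eg).
Qed.

Lemma cap_slide s t w : wapp w s = Some t ->
  eqw (s ++ [:: false; false]) t (w ++ [:: Cap (size t)]) (Cap (size s) :: w).
Proof.
elim: w s => [|g w IH] s; first by case=> ->; apply: eqw_refl.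
rewrite wapp_cons; case Eg: (gapp g s) => [s1|] // Hw.
have [le_gs size_s1] := gapp_size Eg.
have Hg : wapp [:: g] (s ++ [:: false; false]) = Some (s1 ++ [:: false; false]).
  by rewrite wapp1 (gapp_catr _ Eg).
apply: (@eqw_trans _ _ _ ([:: g; Cap (size s1)] ++ w)).
  by have := eqw_ctx Hg (wapp0 _) (IH _ Hw); rewrite !cats0.
apply: (eqw_ctx (u := [::]) (a := [:: g; Cap (size s1)])
               (b := [:: Cap (size s); g]) erefl Hw).
apply: eqw_brel.
- have := @br_interchange _ qh Om (s ++ [:: false; false]) g (Cap (size s1)).
  by rewrite /= (_ : (size s1 + gin g - gout g)%N = size s); [apply; lia | lia].
- by rewrite wapp_cons (gapp_catr _ Eg) wapp1 gapp_cap_end cats0.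
- by rewrite wapp_cons gapp_cap_end cats0 wapp1.
Qed.

Lemma eqw_zig s t w : wapp w s = Some (t ++ [:: false]) ->
  eqw s (t ++ [:: false]) (Cup (size s) :: w ++ [:: Cap (size t)]) w.
Proof.
move=> Hw; apply: (@eqw_trans _ _ _ (w ++ [:: Cup (size t).+1; Cap (size t)])).
  have Hcap : wapp [:: Cap (size t)] ((t ++ [:: false]) ++ [:: false; false])
              = Some (t ++ [:: false]) by rewrite wapp1 -catA gapp_cap_end.
  have := eqw_ctx (wapp0 _) Hcap (cup_slide Hw).
  by rewrite /= -catA size_cat addn1.
have := eqw_ctx Hw (wapp0 _)
  (eqw_brel (br_zig _ _ _ _) _ (wapp0 _)).
rewrite !cats0; apply.
have -> : (size t).+1 = size (t ++ [:: false]) by rewrite size_cat addn1.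
by rewrite wapp_cons gapp_cup_end wapp1 -catA gapp_cap_end.
Qed.

Lemma eqw_zag s t w : wapp w (s ++ [:: false]) = Some t ->
  eqw (s ++ [:: false]) t (Cup (size s) :: w ++ [:: Cap (size t)]) w.
Proof.
move=> Hw; have size_s1 : (size s).+1 = size (s ++ [:: false]).
  by rewrite size_cat addn1.
have Hcup : wapp [:: Cup (size s)] (s ++ [:: false])
            = Some ((s ++ [:: false]) ++ [:: false; false]).
  by rewrite wapp1 (gapp_catr _ (gapp_cup_end s)) -!catA.
apply: (@eqw_trans _ _ _ [:: Cup (size s), Cap (size s).+1 & w]).
  by have := eqw_ctx Hcup (wapp0 _) (cap_slide Hw); rewrite !cats0 size_s1.
apply: (eqw_ctx (u := [::]) (a := [:: Cup (size s); Cap (size s).+1])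
               (b := [::]) (wapp0 _) Hw).
apply: eqw_brel (br_zag _ _ _ _) _ (wapp0 _).
by rewrite wapp_cons -wapp1 Hcup wapp1 size_s1 gapp_cap_end cats0.
Qed.

Lemma hom_iso_bend s t : hom_iso qh Om s (t ++ [:: false]) (s ++ [:: false]) t.
Proof.
have Hcap : wapp [:: Cap (size t)] ((t ++ [:: false]) ++ [:: false]) = Some t.
  by rewrite wapp1 -catA gapp_cap_end cats0.
have Hcup : wapp [:: Cup (size s)] s = Some ((s ++ [:: false]) ++ [:: false]).
  by rewrite wapp1 gapp_cup_end -catA.
apply: (@hom_iso_mapw _ _ _ _ (cat^~ [:: Cap (size t)]) (cat [:: Cup (size s)])).
- by move=> w /(wapp_catr [:: false]) Hw; rewrite wapp_cat Hw.
- by move=> w /(wapp_catr [:: false]) Hw; rewrite wapp_cat Hcup.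
- by move=> x /(inRel_catr [:: false]); apply: inRel_postcomp.
- by move=> x /(inRel_catr [:: false]); apply: inRel_precomp.
- by move=> w; apply: eqw_zig.
- by move=> w; apply: eqw_zag.
Qed.

End Relations.

Lemma hom_iso_obj_shift (K : fieldType) (qh Om : K) r n :
  hom_iso qh Om (obj r) (obj n.+1) (obj r.+1) (obj n).
Proof. by rewrite !obj_S; apply: hom_iso_bend. Qed.

Lemma hom_iso_obj0 (K : fieldType) (qh Om : K) n r : (r <= n)%N ->
  hom_iso qh Om (obj r) (obj (n - r)) (obj 0) (obj n).
Proof.
elim: r => [|r IH] le_rn; first by rewrite subn0; apply: hom_iso_refl.
apply: hom_iso_trans (IH (ltnW le_rn)).
by rewrite (_ : (n - r = (n - r.+1).+1)%N); [apply/hom_iso_sym/hom_iso_obj_shift | lia].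
Qed.

Theorem lemma3p23 (k : nat) (k_gt0 : (0 < k)%N) (k_even : ~~ odd k)
  (Om : K0) (Om_unit : Om != 0%R) (N r1 r2 : nat) :
  (r1 <= N.*2)%N -> (r2 <= N.*2)%N ->
  hom_iso (qhalf k) Om (obj r1) (obj (N.*2 - r1)) (obj r2) (obj (N.*2 - r2)).
Proof.
move=> le_r1 le_r2.
exact: hom_iso_trans (hom_iso_obj0 _ _ le_r1) (hom_iso_sym (hom_iso_obj0 _ _ le_r2)).
Qed.
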